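(* Consider $n$ people and $m$ items, with a social network $a_{il}\in\{0,1\}$ ($a_{il}=1$ iff person $i$ and person $l$ are connected), yesterday's purchases $x_{lk}\in\{0,1\}$ (person $l$ bought item $k$ yesterday) and today's purchases $y_{ik}\in\mathbb{N}$ (units of item $k$ bought by person $i$ today). Let $\rho_i$ be latent per-person confounders, $\tau_k$ latent per-item confounders, and $\hat c_i$, $\hat w_k$ per-person and per-item substitute variables. Fix a person $j$, let $n_j$ be the number of peers $i$ with $a_{ij}=1$, and for each $i,k$ write $a_i^{-j}=\{a_{il}: l\neq j\}$ and $x_k^{-j}=\{x_{lk}: l\neq j\}$. Define $$\mu_{ik}(a,x)=\mathbb{E}[y_{ik}\mid a_{ij}=a,\ x_{jk}=x,\ a_i^{-j},\ x_k^{-j},\ \rho_i,\ \tau_k],$$ and let the average social influence of person $j$ be $$\psi_j=\frac{1}{n_j\, m}\sum_{i:\,a_{ij}=1}\sum_{k=1}^m \mathbb{E}_{\rho_i,\tau_k}\Big[\mathbb{E}_{a_i^{-j},x_k^{-j}}\big[\mu_{ik}(1,1)-\mu_{ik}(1,0)\big]\Big].$$ Suppose that for all $i,k$ and $a,x\in\{0,1\}$, $$\mu_{ik}(a,x)=\mathbb{E}[y_{ik}\mid a_{ij}=a,\ x_{jk}=x,\ a_i^{-j},\ x_k^{-j},\ \hat c_i,\ \hat w_k],$$ and that today's purchases are drawn from the Poisson model $y_{ik}\sim\mathrm{Pois}(\lambda_{ik})$ with $$\lambda_{ik}=\gamma_k^\top \hat c_i+\alpha_i^\top \hat w_k+\sum_{l}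 a_{il}\, x_{lk}\,\beta_l,$$ where $\gamma_k,\alpha_i$ are nonnegative vectors and $\beta_l\ge 0$ are scalars. Then $\psi_j=\beta_j$.
   Context: The formula for $\psi_j$ is the backdoor-adjusted expression of the causal quantity $\psi_j=\frac{1}{n_j}\sum_{i:a_{ij}=1}\frac1m\sum_k\big(\mathbb{E}[y_{ik}\mid a_{ij}=1; \mathrm{do}(x_{jk}=1)]-\mathbb{E}[y_{ik}\mid a_{ij}=1;\mathrm{do}(x_{jk}=0)]\big)$ under a causal model in which connections are caused by per-person traits, yesterday's purchases by per-person preferences and per-item attributes $\tau_k$, and today's purchase $y_{ik}$ by these same variables together with $a_i$ and $x_k$; the substitutes $\hat c_i=\mathbb{E}[c_i\mid \mathbf a]$ and $\hat w_k=\mathbb{E}[w_k\mid\mathbf x]$ are posterior means of latent factors in Poisson factor models of the network and of yesterday's purchases. The result is an infinite-data (population-level) statement. *)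

From HB Require Import structures.
From mathcomp Require Import all_boot all_order all_algebra.
From mathcomp Require Import all_classical all_reals all_analysis.
Set Implicit Arguments. Unset Strict Implicit. Unset Printing Implicit Defensive.
Import Order.TTheory GRing.Theory Num.Theory.
Local Open Scope ring_scope.

(* [upd f j b]: the vector f with its j-th coordinate replaced by b.
   Used to write (a_{ij} = a, a_i^{-j}) and (x_{jk} = x, x_k^{-j}). *)
Definition upd (n : nat) (f : 'I_n -> bool) (j : 'I_n) (b : bool) : 'I_n -> bool :=
  fun l => if l == j then b else f l.

Definition dotp (R : realType) (d : nat) (u v : 'I_d -> R) : R :=
  \sum_(q < d) u q * v q.

(* Mean (expectation) of the Poisson distribution Pois(r) on nat
   (library measure [poisson_prob]; its second argument is unused). *)
Definition poisson_mean (R : realType) (r : R) : \bar R :=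
  (\int[poisson_prob r 0%N]_t (t%:R : R)%:E)%E.

Definition pois_rate (R : realType) (n m d : nat)
  (gamma : 'I_m -> 'I_d -> R) (alpha : 'I_n -> 'I_d -> R) (beta : 'I_n -> R)
  (i : 'I_n) (k : 'I_m) (ai xk : 'I_n -> bool) (c w : 'I_d -> R) : R :=
  dotp (gamma k) c + dotp (alpha i) w + \sum_(l < n) (ai l && xk l)%:R * beta l.

(* mu_{ik}(a,x) as a random variable: the regression function
   M i k (= E[y_ik | a_i, x_k, rho_i, tau_k] as a function of the conditioning
   values) evaluated at a_{ij} = a, x_{jk} = x and the realized
   a_i^{-j}, x_k^{-j}, rho_i, tau_k. *)
Definition mu_ik (R : realType) (n m : nat) (Omega Trho Ttau : Type)
  (j : 'I_n)
  (M : 'I_n -> 'I_m -> ('I_n -> bool) -> ('I_n -> bool) -> Trho -> Ttau -> R)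
  (A : Omega -> 'I_n -> 'I_n -> bool) (X : Omega -> 'I_n -> 'I_m -> bool)
  (rho : 'I_n -> Omega -> Trho) (tau : 'I_m -> Omega -> Ttau)
  (i : 'I_n) (k : 'I_m) (a x : bool) (om : Omega) : R :=
  M i k (upd (A om i) j a) (upd (fun l => X om l k) j x) (rho i om) (tau k om).

(* Average social influence psi_j:
   1/(n_j m) sum_{i : a_ij = 1} sum_k E[ mu_ik(1,1) - mu_ik(1,0) ],
   the expectation being over the joint law (under P) of
   (rho_i, tau_k, a_i^{-j}, x_k^{-j}) (iterated expectation = joint). *)
Definition psi (R : realType) (n m : nat) (dsp : measure_display)
  (Omega : measurableType dsp) (P : probability Omega R) (Trho Ttau : Type)
  (a : 'I_n -> 'I_n -> bool) (j : 'I_n)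
  (M : 'I_n -> 'I_m -> ('I_n -> bool) -> ('I_n -> bool) -> Trho -> Ttau -> R)
  (A : Omega -> 'I_n -> 'I_n -> bool) (X : Omega -> 'I_n -> 'I_m -> bool)
  (rho : 'I_n -> Omega -> Trho) (tau : 'I_m -> Omega -> Ttau) : R :=
  ((#|[set i | a i j]| * m)%:R)^-1 *
  \sum_(i < n | a i j) \sum_(k < m)
     Rintegral P setT (fun om => mu_ik j M A X rho tau i k true true om
                                - mu_ik j M A X rho tau i k true false om).

(* Under the substitute hypothesis, mu_ik(a, x) is the mean of a Poisson
   variable, i.e. its rate lambda_ik.  The rate is affine in the indicators
   a_il x_lk, so switching x_jk from 0 to 1 while a_ij = 1 raises it by exactly
   beta_j, whatever the other conditioning values are.  The integrand of psi_j
   is therefore the constant beta_j, and so is its average.  The only analytic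
   input is E[Pois(r)] = r, which follows from k p_r(k) = r p_r(k - 1). *)

From HB Require Import structures.
From mathcomp Require Import all_boot all_order all_algebra.
From mathcomp Require Import all_classical all_reals all_analysis.
From mathcomp Require Import ring.
Import Order.TTheory GRing.Theory Num.Theory.
Local Open Scope ring_scope.

Section poisson_mean.
Local Open Scope classical_set_scope.
Variables (R : realType) (r : R).
Hypothesis r_gt0 : 0 < r.

Lemma poisson_pmfS (k : nat) :
  poisson_pmf r k.+1 * k.+1%:R = r * poisson_pmf r k.
Proof.
rewrite /poisson_pmf r_gt0 factS exprS natrM invfM.
have k1_neq0 : k.+1%:R != 0 :> R by rewrite pnatr_eq0.
have fact_neq0 : k`!%:R != 0 :> R by rewrite pnatr_eq0 -lt0n fact_gt0.
by field; rewrite fact_neq0 addrC natr1.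
Qed.

Local Open Scope ereal_scope.

Lemma poisson_prob_mseries (k0 : nat) : poisson_prob r k0 =
  mseries (fun k => mscale (NngNum (poisson_pmf_ge0 r k)) \d_k) O.
Proof.
apply/funext => U; rewrite /poisson_prob r_gt0 /mseries /=.
rewrite (_ : U = [set x | x \in U]); last by apply/seteqP; split => x; rewrite /= inE.
rewrite -nneseries_esum; last by move=> k _; rewrite lee_fin poisson_pmf_ge0.
rewrite eseries_mkcond; apply: eq_eseriesr => k _.
rewrite /mscale /= diracE; case: ifPn => kU; first by rewrite mem_set // mule1.
by rewrite memNset ?mule0 //; apply/negP.
Qed.

Lemma nneseries_poisson_pmf : \sum_(k <oo) (poisson_pmf r k)%:E = 1.
Proof.
rewrite -(probability_setT (poisson_prob r 0%N)) /= /poisson_prob r_gt0.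
by rewrite nneseries_esumT // => k; rewrite lee_fin poisson_pmf_ge0.
Qed.

Lemma poisson_mean_gt0 : poisson_mean r = r%:E.
Proof.
rewrite /poisson_mean poisson_prob_mseries ge0_integral_measure_series //=.
under eq_eseriesr => k _.
  rewrite ge0_integral_mscale //= integral_dirac //= diracT mul1e -EFinM.
  over.
have pmf_ge0 k : 0 <= (poisson_pmf r k * k%:R)%:E.
  by rewrite lee_fin mulr_ge0 // poisson_pmf_ge0.
rewrite /= (nneseries_split 0 1) // big_nat1 mulr0 add0e -nneseries_addn //.
under eq_eseriesr => k _ do rewrite add0n addn1 poisson_pmfS EFinM.
rewrite nneseriesZl; last by move=> k _; rewrite lee_fin poisson_pmf_ge0.
by rewrite nneseries_poisson_pmf mule1.
Qed.

End poisson_mean.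

Lemma poisson_meanE (R : realType) (r : R) : 0 <= r -> poisson_mean r = r%:E.
Proof.
rewrite le_eqVlt => /orP[/eqP <-|]; last exact: poisson_mean_gt0.
(* For a nonpositive rate the library's [poisson_prob] is the Dirac mass at 0. *)
rewrite /poisson_mean (_ : poisson_prob 0 0 = \d_0%N); last first.
  by apply/funext => U; rewrite /poisson_prob ltxx.
by rewrite integral_dirac //= diracT mul1e.
Qed.

Section poisson_rate.
Variables (R : realType) (n m d : nat).
Variables (gamma : 'I_m -> 'I_d -> R) (alpha : 'I_n -> 'I_d -> R) (beta : 'I_n -> R).

Lemma dotp_ge0 (u v : 'I_d -> R) :
  (forall q, 0 <= u q) -> (forall q, 0 <= v q) -> 0 <= dotp u v.
Proof. by move=> u0 v0; apply: sumr_ge0 => q _; apply: mulr_ge0. Qed.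

Lemma pois_rate_ge0 i k ai xk (c w : 'I_d -> R) :
  (forall k q, 0 <= gamma k q) -> (forall i q, 0 <= alpha i q) ->
  (forall l, 0 <= beta l) -> (forall q, 0 <= c q) -> (forall q, 0 <= w q) ->
  0 <= pois_rate gamma alpha beta i k ai xk c w.
Proof.
move=> gamma0 alpha0 beta0 c0 w0.
rewrite /pois_rate !addr_ge0 ?dotp_ge0 //.
by apply: sumr_ge0 => l _; rewrite mulr_ge0.
Qed.

Lemma pois_rate_upd_diff i k ai xk (j : 'I_n) (c w : 'I_d -> R) :
  pois_rate gamma alpha beta i k ai (upd xk j true) c w
  - pois_rate gamma alpha beta i k ai (upd xk j false) c w = (ai j)%:R * beta j.
Proof.
have off_j b : \sum_(l < n | l != j) (ai l && upd xk j b l)%:R * beta l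
             = \sum_(l < n | l != j) (ai l && xk l)%:R * beta l.
  by apply: eq_bigr => l /negbTE l_neq_j; rewrite /upd l_neq_j.
rewrite /pois_rate opprD addrACA addrN add0r.
rewrite (bigD1 j) //= [X in _ - X](bigD1 j) //= !off_j.
by rewrite /upd eqxx andbT andbF mul0r add0r addrK.
Qed.

End poisson_rate.

Lemma psi_cst (R : realType) (n m : nat) (dsp : measure_display)
  (Omega : measurableType dsp) (P : probability Omega R) (Trho Ttau : Type)
  (a : 'I_n -> 'I_n -> bool) (j : 'I_n)
  (M : 'I_n -> 'I_m -> ('I_n -> bool) -> ('I_n -> bool) -> Trho -> Ttau -> R)
  (A : Omega -> 'I_n -> 'I_n -> bool) (X : Omega -> 'I_n -> 'I_m -> bool)
  (rho : 'I_n -> Omega -> Trho) (tau : 'I_m -> Omega -> Ttau) (b : R) :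
  (0 < #|[set i | a i j]|)%N -> (0 < m)%N ->
  (forall i k om, mu_ik j M A X rho tau i k true true om
                  - mu_ik j M A X rho tau i k true false om = b) ->
  psi P a j M A X rho tau = b.
Proof.
move=> nj_gt0 m_gt0 diff_cst; rewrite /psi.
have int_diff i k : Rintegral P setT (fun om => mu_ik j M A X rho tau i k true true om
                     - mu_ik j M A X rho tau i k true false om) = b.
  rewrite (@eq_Rintegral _ _ _ P setT (fun=> b)) => [|om _]; last exact: diff_cst.
  by rewrite Rintegral_cst // (congr1 fine (probability_setT P)) mulr1.
rewrite (eq_bigr (fun=> b *+ m)) => [|i _]; last first.
  by rewrite (eq_bigr (fun=> b)) ?sumr_const ?card_ord.
rewrite sumr_const -mulrnA.
have -> : #|a^~ j| = #|[set i | a i j]| by rewrite cardsE.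
rewrite mulnC -[b *+ _]mulr_natr mulrC mulfK //.
by rewrite pnatr_eq0 -lt0n muln_gt0 nj_gt0 m_gt0.
Qed.

Theorem proposition3p1
  (R : realType) (n m d : nat) (dsp : measure_display)
  (Omega : measurableType dsp) (P : probability Omega R)
  (Trho Ttau : Type)
  (* observed network, used for the peer set {i : a_ij = 1} and n_j *)
  (a : 'I_n -> 'I_n -> bool) (j : 'I_n)
  (* random network, yesterday's purchases, latent confounders, substitutes *)
  (A : Omega -> 'I_n -> 'I_n -> bool) (X : Omega -> 'I_n -> 'I_m -> bool)
  (rho : 'I_n -> Omega -> Trho) (tau : 'I_m -> Omega -> Ttau)
  (chat : 'I_n -> Omega -> 'I_d -> R) (what : 'I_m -> Omega -> 'I_d -> R)
  (* regression functions E[y_ik | a_i, x_k, rho_i, tau_k] and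
     E[y_ik | a_i, x_k, chat_i, what_k] *)
  (M : 'I_n -> 'I_m -> ('I_n -> bool) -> ('I_n -> bool) -> Trho -> Ttau -> R)
  (N : 'I_n -> 'I_m -> ('I_n -> bool) -> ('I_n -> bool) ->
         ('I_d -> R) -> ('I_d -> R) -> R)
  (gamma : 'I_m -> 'I_d -> R) (alpha : 'I_n -> 'I_d -> R) (beta : 'I_n -> R) :
  (0 < #|[set i | a i j]|)%N -> (0 < m)%N ->
  (forall k q, 0 <= gamma k q) -> (forall i q, 0 <= alpha i q) ->
  (forall l, 0 <= beta l) ->
  (* substitutes are posterior means of nonnegative latent factors *)
  (forall i om q, 0 <= chat i om q) -> (forall k om q, 0 <= what k om q) ->
  (* substitute hypothesis: mu_ik(a,x) = E[y_ik | a_ij=a, x_jk=x, a_i^-j, x_k^-j, chat_i, what_k] *)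
  (forall i k (av xv : bool) om,
      mu_ik j M A X rho tau i k av xv om =
      N i k (upd (A om i) j av) (upd (fun l => X om l k) j xv)
            (chat i om) (what k om)) ->
  (* Poisson outcome model: y_ik | a_i, x_k, chat_i, what_k ~ Pois(lambda_ik) *)
  (forall i k ai xk c w,
      ((N i k ai xk c w)%:E = poisson_mean (pois_rate gamma alpha beta i k ai xk c w))%E) ->
  psi P a j M A X rho tau = beta j.
Proof.
move=> nj_gt0 m_gt0 gamma0 alpha0 beta0 chat0 what0 mu_subst N_pois.
have N_rate i k om ai xk :
    N i k ai xk (chat i om) (what k om)
    = pois_rate gamma alpha beta i k ai xk (chat i om) (what k om).
  apply/EFin_inj; rewrite N_pois poisson_meanE //.
  exact: pois_rate_ge0.
apply: psi_cst => // i k om.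
by rewrite !mu_subst !N_rate pois_rate_upd_diff /upd eqxx mul1r.
Qed.
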